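(* Let $(\mathcal{S},\mathcal{A},P,r,\gamma)$ be a finite discounted MDP, let $\pi$ be a policy with advantage function $A^\pi$, fix a state $s\in\mathcal{S}$ and a scalar $\eta_s>0$. Define $\pi^+_s(\eta_s) := \operatorname{Proj}_{\Delta(\mathcal{A})}\big(\pi_s + \eta_s A^\pi_{s,\cdot}\big)$ and $f_s(\eta_s) := \sum_{a\in\mathcal{A}} \pi^+_{s,a}(\eta_s)\, A^\pi_{s,a}$. Then $$f_s(\eta_s) \ge \frac{\big(\max_{a\in\mathcal{A}} A^\pi_{s,a}\big)^2}{\max_{a\in\mathcal{A}} A^\pi_{s,a} + \frac{2+5|\mathcal{A}|}{\eta_s}}.$$
   Context: A finite discounted MDP has finite state space $\mathcal{S}$, finite action space $\mathcal{A}$, transition kernel $P$, reward $r:\mathcal{S}\times\mathcal{A}\to[0,1]$ and discount $\gamma\in[0,1)$. A (stationary stochastic) policy $\pi$ assigns to each state $s$ a distribution $\pi_s=(\pi_{s,a})_{a\in\mathcal{A}}\in\Delta(\mathcal{A})$ (the probability simplex). $V^\pi(s)=\mathbb{E}[\sum_{t\ge0}\gamma^t r(s_t,a_t)\mid s_0=s]$ with $a_t\sim\pi_{s_t}$, $s_{t+1}\sim P(\cdot\mid s_t,a_t)$; $Q^\pi(s,a)$ is defined analogously with $a_0=a$; the advantage is $A^\pi_{s,a}=Q^\pi(s,a)-V^\pi(s)$. $\operatorname{Proj}_{\Delta(\mathcal{A})}$ denotes Euclidean projection onto the probability simplex. *)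

From HB Require Import structures.
From mathcomp Require Import all_boot all_order all_algebra.
From mathcomp Require Import all_classical all_reals all_analysis.
Set Implicit Arguments. Unset Strict Implicit. Unset Printing Implicit Defensive.
Import Order.TTheory GRing.Theory Num.Theory.
Local Open Scope ring_scope.

Section MDP.
Variables (R : realType) (S A : finType).

Definition is_distr (T : finType) (p : T -> R) : Prop :=
  (forall x, 0 <= p x) /\ \sum_(x : T) p x = 1.

Definition is_MDP (P : S -> A -> S -> R) (r : S -> A -> R) (gamma : R) : Prop :=
  (forall s a, is_distr (P s a)) /\ (forall s a, 0 <= r s a <= 1) /\
  0 <= gamma < 1.

Definition is_policy (pi : S -> A -> R) : Prop := forall s, is_distr (pi s).

Variables (P : S -> A -> S -> R) (r : S -> A -> R) (gamma : R) (pi : S -> A -> R).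

(* expected reward r(s_t,a_t) at time t, starting from s_0 = s, actions ~ pi *)
Fixpoint exp_rew (t : nat) (s : S) : R :=
  match t with
  | 0 => \sum_(a : A) pi s a * r s a
  | t'.+1 => \sum_(a : A) pi s a * \sum_(s' : S) P s a s' * exp_rew t' s'
  end.

(* expected reward at time t, starting from s_0 = s, a_0 = a, then following pi *)
Definition exp_rew_Q (t : nat) (s : S) (a : A) : R :=
  match t with
  | 0 => r s a
  | t'.+1 => \sum_(s' : S) P s a s' * exp_rew t' s'
  end.

Definition Vpi (s : S) : R :=
  limn (fun N => \sum_(0 <= t < N) gamma ^+ t * exp_rew t s).

Definition Qpi (s : S) (a : A) : R :=
  limn (fun N => \sum_(0 <= t < N) gamma ^+ t * exp_rew_Q t s a).

Definition Adv (s : S) (a : A) : R := Qpi s a - Vpi s.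

End MDP.

Definition in_simplex (R : realType) (A : finType) (p : A -> R) : Prop :=
  is_distr p.

Definition is_proj_simplex (R : realType) (A : finType) (y p : A -> R) : Prop :=
  in_simplex p /\
  forall q : A -> R, in_simplex q ->
    \sum_(a : A) (y a - p a) ^+ 2 <= \sum_(a : A) (y a - q a) ^+ 2.

(** The projection [p] of [y := pi_s + eta A_s] onto the simplex satisfies the
    variational inequality [<y - p, q - p> <= 0] for every distribution [q].
    Since [A_s] has [pi_s]-mean zero, taking [q := pi_s] bounds [|p - pi_s|^2]
    by the scaled gain [F := eta f_s], and taking [q] the vertex of a maximal
    advantage [M] gives, via AM-GM and [|q - p|^2 <= 2], the bound
    [m^2 <= 2F(1 + m)] for [m := eta M]; this settles small [m].  For large
    [m], every action in the support of [p] is [y - p]-maximal, hence has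
    advantage at least [M - 2/eta], so [F >= m - 2]. *)
From HB Require Import structures.
From mathcomp Require Import all_boot all_order all_algebra.
From mathcomp Require Import all_classical all_reals all_analysis.
From mathcomp Require Import ring lra.
Import Order.TTheory GRing.Theory Num.Theory.
Set Implicit Arguments. Unset Strict Implicit. Unset Printing Implicit Defensive.
Local Open Scope ring_scope.

Section RealFacts.
Variable R : realFieldType.

Lemma ler0_of_le_small_multiples (X W : R) : 0 <= W ->
  (forall t, 0 < t <= 1 -> 2 * X <= t * W) -> X <= 0.
Proof.
move=> W0 small; rewrite leNgt; apply/negP => X0.
have XW0 : 0 < X + W by lra.
have t01 : 0 < X / (X + W) <= 1 by rewrite divr_gt0 // ler_pdivrMr //=; lra.
have := small _ t01; rewrite mulrAC ler_pdivlMr //; nra.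
Qed.

Lemma sqr_le_mul_of_bounds (m F c : R) : 0 <= m -> 0 <= F -> 6 <= c ->
  m ^+ 2 <= 2 * F * (1 + m) -> m - 2 <= F -> m ^+ 2 <= F * (m + c).
Proof.
move=> m0 F0 c6 small large; have [m3|m3] := lerP m 3.
  have : 0 <= F * (c - 2 - m) by apply: mulr_ge0; lra.
  nra.
have : (m - 2) * (m + c) <= F * (m + c) by rewrite ler_wpM2r //; lra.
have : 0 <= (m - 3) * (c - 6) by apply: mulr_ge0; lra.
nra.
Qed.

End RealFacts.

Section Simplex.
Variables (R : realType) (A : finType).
Implicit Types (p q w y : A -> R).

Lemma distr_le1 w x : is_distr w -> w x <= 1.
Proof. by move=> [w0 <-]; rewrite (bigD1 x) //= lerDl sumr_ge0. Qed.

Lemma distr_sum_sqr_le1 w : is_distr w -> \sum_x w x ^+ 2 <= 1.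
Proof.
move=> Hw; case: (Hw) => w0 <-; apply: ler_sum => x _.
by rewrite expr2 ler_piMr // distr_le1.
Qed.

Lemma distr_avg01 (T : finType) (w f : T -> R) :
  is_distr w -> (forall x, 0 <= f x <= 1) -> 0 <= \sum_x w x * f x <= 1.
Proof.
move=> [w0 w1] f01; apply/andP; split.
  by apply: sumr_ge0 => x _; apply: mulr_ge0 => //; case/andP: (f01 x).
rewrite -w1; apply: ler_sum => x _.
by rewrite ler_piMr //; case/andP: (f01 x).
Qed.

Lemma sum_mulr_delta (z : A -> R) b : \sum_x z x * (x == b)%:R = z b.
Proof.
rewrite (bigD1 b) //= eqxx mulr1 big1 ?addr0 // => x /negbTE ->.
by rewrite mulr0.
Qed.

Lemma sum_delta b : \sum_(x : A) (x == b)%:R = 1 :> R.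
Proof. by rewrite (bigD1 b) //= eqxx big1 ?addr0 // => x /negbTE ->. Qed.

Lemma in_simplex_delta (b : A) : in_simplex (fun a => (a == b)%:R : R).
Proof. by split=> [a|]; [exact: ler0n | exact: sum_delta]. Qed.

Lemma in_simplex_convex p q t : in_simplex p -> in_simplex q -> 0 <= t <= 1 ->
  in_simplex (fun a => p a + t * (q a - p a)).
Proof.
move=> [p0 p1] [q0 q1] t01; split.
  move=> a; have := p0 a; have := q0 a; nra.
by rewrite big_split /= -mulr_sumr sumrB p1 q1 subrr mulr0 addr0.
Qed.

Lemma in_simplex_transfer p x b : in_simplex p ->
  in_simplex (fun a => p a + p x * ((a == b)%:R - (a == x)%:R)).
Proof.
move=> [p0 p1]; split.
  move=> a; have := p0 x; case: (eqVneq a x) => [->|_];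
    by have := p0 a; case: (_ == b); rewrite ?mulr1n ?mulr0n; lra.
by rewrite big_split /= -mulr_sumr sumrB !sum_delta subrr mulr0 addr0.
Qed.

Lemma simplex_dist2_le2 p q : in_simplex p -> in_simplex q ->
  \sum_a (q a - p a) ^+ 2 <= 2.
Proof.
move=> Hp Hq; case: (Hp) => p0 _; case: (Hq) => q0 _.
have -> : \sum_a (q a - p a) ^+ 2 =
    \sum_a q a ^+ 2 + \sum_a p a ^+ 2 - 2 * \sum_a p a * q a.
  by rewrite -big_split /= mulr_sumr -sumrB; apply: eq_bigr => a _; ring.
have : 0 <= \sum_a p a * q a by apply: sumr_ge0 => a _; exact: mulr_ge0.
have := distr_sum_sqr_le1 Hp; have := distr_sum_sqr_le1 Hq; lra.
Qed.

Lemma proj_simplex_VI y p q : is_proj_simplex y p -> in_simplex q ->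
  \sum_a (y a - p a) * (q a - p a) <= 0.
Proof.
move=> [Hp pmin] Hq.
apply: (@ler0_of_le_small_multiples _ _ (\sum_a (q a - p a) ^+ 2)).
  by apply: sumr_ge0 => a _; exact: sqr_ge0.
move=> t /andP[t0 t1].
have := pmin _ (in_simplex_convex Hp Hq (introT andP (conj (ltW t0) t1))).
have -> : \sum_a (y a - (p a + t * (q a - p a))) ^+ 2 =
    \sum_a (y a - p a) ^+ 2
    - t * (2 * \sum_a (y a - p a) * (q a - p a) - t * \sum_a (q a - p a) ^+ 2).
  rewrite !mulr_sumr -sumrB mulr_sumr -sumrB; apply: eq_bigr => a _; ring.
by rewrite lerBrDr gerDl pmulr_rle0 // subr_le0.
Qed.

(* Test the variational inequality on the move of the mass of [x] onto [b]. *)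
Lemma proj_simplex_support y p x b : is_proj_simplex y p -> 0 < p x ->
  y b - p b <= y x - p x.
Proof.
move=> Hproj px; have := proj_simplex_VI Hproj (in_simplex_transfer x b Hproj.1).
have -> : \sum_a (y a - p a) * (p a + p x * ((a == b)%:R - (a == x)%:R) - p a) =
    p x * (\sum_a (y a - p a) * (a == b)%:R - \sum_a (y a - p a) * (a == x)%:R).
  by rewrite -sumrB mulr_sumr; apply: eq_bigr => a _; ring.
by rewrite !sum_mulr_delta pmulr_rle0 // subr_le0.
Qed.

End Simplex.

Section ProjectedStep.
Variables (R : realType) (A : finType) (pi g p : A -> R) (b : A).
Hypotheses (Hpi : is_distr pi) (Hproj : is_proj_simplex (fun a => pi a + g a) p).
Hypotheses (g_mean0 : \sum_a pi a * g a = 0) (g_max : forall a, g a <= g b).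

Local Notation gain := (\sum_a p a * g a).

Lemma max_ge0_of_mean0 : 0 <= g b.
Proof.
case: Hpi => pi0 pi1; rewrite -g_mean0 -[g b]mul1r -pi1 mulr_suml.
by apply: ler_sum => a _; rewrite ler_wpM2l.
Qed.

Lemma proj_dist_le_gain : \sum_a (p a - pi a) ^+ 2 <= gain.
Proof.
have := proj_simplex_VI Hproj Hpi.
have -> : \sum_a (pi a + g a - p a) * (pi a - p a) =
    \sum_a (p a - pi a) ^+ 2 + (\sum_a pi a * g a - gain).
  by rewrite -sumrB -big_split /=; apply: eq_bigr => a _; ring.
by rewrite g_mean0 sub0r subr_le0.
Qed.

Lemma sqr_max_le_proj_gain : g b ^+ 2 <= 2 * gain * (1 + g b).
Proof.
set m := g b; set e := fun a => (a == b)%:R : R.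
set X := \sum_a (p a - pi a) * (e a - p a).
have mX : m - gain <= X.
  have := proj_simplex_VI Hproj (in_simplex_delta R b).
  have -> : \sum_a (pi a + g a - p a) * (e a - p a) =
      \sum_a g a * e a - gain - X.
    by rewrite -!sumrB; apply: eq_bigr => a _; ring.
  rewrite sum_mulr_delta -/m; lra.
(* AM-GM: [4 m u w <= 4 u^2 + m^2 w^2] *)
have amgm : 4 * m * X <=
    4 * \sum_a (p a - pi a) ^+ 2 + m ^+ 2 * \sum_a (e a - p a) ^+ 2.
  rewrite !mulr_sumr -big_split /=; apply: ler_sum => a _.
  have := sqr_ge0 (2 * (p a - pi a) - m * (e a - p a)); nra.
have := simplex_dist2_le2 Hproj.1 (in_simplex_delta R b).
have := proj_dist_le_gain; have := max_ge0_of_mean0.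
rewrite -/m -/e; nra.
Qed.

Lemma max_sub2_le_proj_gain : g b - 2 <= gain.
Proof.
case: (Hproj) => -[p0 p1] _.
rewrite -[g b - 2]mul1r -p1 mulr_suml; apply: ler_sum => a _.
have [->|pa] := eqVneq (p a) 0; first by rewrite !mul0r.
have pa0 : 0 < p a by rewrite lt0r pa p0.
have := proj_simplex_support b Hproj pa0.
have := distr_le1 a Hpi; have := distr_le1 b Hproj.1; have := Hpi.1 b.
by move=> *; rewrite ler_wpM2l //; lra.
Qed.

Lemma proj_gain_bound c : 6 <= c -> g b ^+ 2 <= gain * (g b + c).
Proof.
move=> c6; apply: sqr_le_mul_of_bounds => //.
- exact: max_ge0_of_mean0.
- exact: le_trans (sumr_ge0 _ (fun a _ => sqr_ge0 _)) proj_dist_le_gain.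
- exact: sqr_max_le_proj_gain.
- exact: max_sub2_le_proj_gain.
Qed.

End ProjectedStep.

Lemma proj_step_gain_ge (R : realType) (A : finType) (pi adv p : A -> R) b eta c :
  is_distr pi -> 0 < eta ->
  is_proj_simplex (fun a => pi a + eta * adv a) p ->
  \sum_a pi a * adv a = 0 -> (forall a, adv a <= adv b) -> 6 <= c ->
  adv b ^+ 2 / (adv b + c / eta) <= \sum_a p a * adv a.
Proof.
move=> Hpi eta0 Hproj mean0 adv_max c6.
have g_mean0 : \sum_a pi a * (eta * adv a) = 0.
  rewrite -[RHS](mulr0 eta) -[in RHS]mean0 mulr_sumr.
  by apply: eq_bigr => a _; ring.
have g_max a : eta * adv a <= eta * adv b by rewrite ler_pM2l.
have := proj_gain_bound Hpi Hproj g_mean0 g_max c6.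
have := max_ge0_of_mean0 Hpi g_mean0 g_max; rewrite pmulr_rge0 // => M0.
set f := \sum_a p a * adv a; set k := adv b + c / eta.
have k0 : 0 < k by rewrite ltr_wpDl // divr_gt0 //; lra.
have -> : \sum_a p a * (eta * adv a) = eta * f.
  by rewrite mulr_sumr; apply: eq_bigr => a _; ring.
have -> : eta * adv b + c = eta * k.
  by rewrite mulrDr mulrCA divff ?gt_eqF ?mulr1.
move=> bound; rewrite ler_pdivrMr // -(ler_pM2l (exprn_gt0 2 eta0)) -exprMn.
by apply: (le_trans bound); rewrite mulrACA -expr2.
Qed.

Section Advantage.
Variables (R : realType) (S A : finType).
Variables (P : S -> A -> S -> R) (r : S -> A -> R) (gamma : R) (pi : S -> A -> R).
Hypotheses (HM : is_MDP P r gamma) (Hpi : is_policy pi).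

Lemma exp_rew01 t s : 0 <= exp_rew P r pi t s <= 1.
Proof.
case: HM => HP [Hr _]; elim: t s => [|t IH] s /=; apply: distr_avg01 => //.
by move=> a; apply: distr_avg01.
Qed.

Lemma exp_rew_Q01 t s a : 0 <= exp_rew_Q P r pi t s a <= 1.
Proof.
case: HM => HP [Hr _]; case: t => [|t] /=; first exact: Hr.
by apply: distr_avg01 => // s'; apply: exp_rew01.
Qed.

Lemma exp_rewE t s :
  exp_rew P r pi t s = \sum_a pi s a * exp_rew_Q P r pi t s a.
Proof. by case: t. Qed.

Lemma Qpi_cvg s a :
  cvgn (fun N => \sum_(0 <= t < N) gamma ^+ t * exp_rew_Q P r pi t s a).
Proof.
case: HM => _ [_ /andP[gamma0 gamma1]].
apply: (@series_le_cvg _ _ (geometric 1 gamma)).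
- by move=> t; rewrite mulr_ge0 ?exprn_ge0 //; case/andP: (exp_rew_Q01 t s a).
- by move=> t; rewrite geometric_ge0.
- by move=> t /=; rewrite mul1r ler_piMr ?exprn_ge0 //; case/andP: (exp_rew_Q01 t s a).
- by apply: is_cvg_geometric_series; rewrite ger0_norm.
Qed.

Lemma Vpi_avg_Qpi s :
  Vpi P r gamma pi s = \sum_a pi s a * Qpi P r gamma pi s a.
Proof.
have partial N : \sum_(0 <= t < N) gamma ^+ t * exp_rew P r pi t s =
    \sum_a pi s a * \sum_(0 <= t < N) gamma ^+ t * exp_rew_Q P r pi t s a.
  under eq_bigr do rewrite exp_rewE mulr_sumr.
  rewrite exchange_big; apply: eq_bigr => a _; rewrite mulr_sumr.
  by apply: eq_bigr => t _; ring.
rewrite /Vpi (funext partial); set V_N := (fun N : nat => _).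
apply: (@cvg_lim _ _ _ _ _ V_N) => //.
apply: cvg_big => [|a _]; first exact: add_continuous.
by apply: cvgMl_tmp; apply: Qpi_cvg.
Qed.

Lemma Adv_mean0 s : \sum_a pi s a * Adv P r gamma pi s a = 0.
Proof.
case: (Hpi s) => _ pi1; rewrite /Adv; under eq_bigr do rewrite mulrBr.
by rewrite sumrB -Vpi_avg_Qpi -mulr_suml pi1 mul1r subrr.
Qed.

End Advantage.

Unset Implicit Arguments.
Theorem mainTheorem2 (R : realType) (S A : finType)
    (P : S -> A -> S -> R) (r : S -> A -> R) (gamma : R) (pi : S -> A -> R)
    (s : S) (eta : R) (piplus : A -> R) (Amax : R) :
  is_MDP P r gamma ->
  is_policy pi ->
  0 < eta ->
  (* piplus = Proj_{Delta(A)} (pi_s + eta * A^pi_{s,.}) *)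
  is_proj_simplex (fun a => pi s a + eta * Adv P r gamma pi s a) piplus ->
  (* Amax = max_a A^pi_{s,a} *)
  (exists a, Adv P r gamma pi s a = Amax) ->
  (forall a, Adv P r gamma pi s a <= Amax) ->
  \sum_(a : A) piplus a * Adv P r gamma pi s a >=
    Amax ^+ 2 / (Amax + (2 + 5 * #|A|%:R) / eta).
Proof.
move=> HM Hpi eta0 Hproj [b <-] adv_max.
have cardA : 1 <= #|A|%:R :> R by rewrite ler1n; apply/card_gt0P; exists b.
by apply: proj_step_gain_ge (Hpi s) eta0 Hproj (Adv_mean0 HM Hpi s) adv_max _; lra.
Qed.
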